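(* Let $\mathcal{R}$ be a finite valuation ring with residue field of cardinality $q$ and with uniformizer of nilpotency degree $r$ (so $|\mathcal{R}|=q^r$), and let $\mathcal{R}^*$ denote its group of units. Let $G$ be a subgroup of $\mathcal{R}^*$, let $g,h\colon G\to\mathcal{R}^*$ be functions, and let $f(x,y)=g(x)h(y)(x+y)$ for $x,y\in G$. Let $K\ge1$ and assume: (i) for every fixed $z\in G$, the function $x\mapsto g(xz)/g(x)$ takes at most $K$ distinct values on $G$, and the function $x\mapsto h(xz)/h(x)$ takes at most $K$ distinct values on $G$; (ii) for every $u\in G$, $\mu(\varphi_u)\le K$, where $\varphi_u\colon G\to\mathcal{R}$, $\varphi_u(x)=x\,g(x)\,h(ux)$. Then there is a constant $c>0$ depending only on $r$ and $K$ such that for all $A,B,C\subset G$, \[|f(A,B)|\,|A\cdot C|\,|B\cdot C|\ \ge\ c\min\left\{q^r|A||B|,\ \frac{|A|^2|B|^2|C|}{q^{2r-1}}\right\}.\]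
   Context: A finite valuation ring is a finite commutative ring with identity that is local (has a unique maximal ideal) and principal (every ideal is principal); its maximal ideal is generated by a non-unit $z$ (a uniformizer), the residue field $\mathcal{R}/(z)$ has $q$ elements, and $r$ is the least integer with $z^r=0$. For a function $\varphi\colon G\to\mathcal{R}$, $\mu(\varphi)=\max_{t\in\mathcal{R}}|\{x\in G:\varphi(x)=t\}|$. Notation: $f(A,B)=\{f(x,y):x\in A,y\in B\}$, $A\cdot C=\{ac:a\in A,c\in C\}$. *)

From HB Require Import structures.
From mathcomp Require Import all_boot all_order all_algebra.
Set Implicit Arguments. Unset Strict Implicit. Unset Printing Implicit Defensive.
Import Order.TTheory GRing.Theory Num.Theory.
Local Open Scope ring_scope.

Section FVR.
Variable R : finComUnitRingType.

Definition is_ideal (I : {set R}) : Prop :=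
  [/\ 0 \in I,
      (forall x y, x \in I -> y \in I -> x - y \in I) &
      (forall a x, x \in I -> a * x \in I)].

Definition is_maximal_ideal (M : {set R}) : Prop :=
  [/\ is_ideal M, M != [set: R] &
      forall I, is_ideal I -> M \subset I -> I = M \/ I = [set: R]].

Definition pideal (a : R) : {set R} := [set a * x | x : R].

Definition is_local : Prop :=
  exists M, forall I, is_maximal_ideal I <-> I = M.

Definition is_principal : Prop :=
  forall I, is_ideal I -> exists a, I = pideal a.

Definition finite_valuation_ring : Prop := is_local /\ is_principal.

Definition uniformizer (z : R) : Prop :=
  z \isn't a GRing.unit /\ is_maximal_ideal (pideal z).

Definition nilp_degree (z : R) (r : nat) : Prop :=
  z ^+ r = 0 /\ forall n, (n < r)%N -> z ^+ n != 0.

(* cardinality of the residue field R/(z): number of additive cosets of (z) *)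
Definition residue_card (z : R) : nat := (#|[set: R]| %/ #|pideal z|)%N.

Definition unit_subgroup (G : {set R}) : Prop :=
  [/\ {in G, forall x, x \is a GRing.unit},
      1 \in G,
      {in G &, forall x y, x * y \in G} &
      {in G, forall x, x^-1 \in G}].

Definition mu_on (G : {set R}) (phi : R -> R) : nat :=
  (\max_(t : R) #|[set x in G | phi x == t]|)%N.

Definition fimage (f : R -> R -> R) (A B : {set R}) : {set R} :=
  [set f x y | x in A, y in B].
Definition setmul (A C : {set R}) : {set R} := [set a * c | a in A, c in C].

End FVR.

(* Let P be the points (s, v / g s), s in A.C, v in f(A, B), and L the lines
   Y = (rho h(y) / c) X + rho h(y) y with c in C, y in B and rho a ratio
   g(x c^-1) / g(x).  Each (x, y, c) in A x B x C yields the incidence of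
   (x c, f(x, y) / g(x c)) with the line for (c, y, g(x) / g(x c)); by (ii) at
   most K triples yield the same incidence, and by (i) |L| <= K |B| |C|.  In R
   every point lies on |R^*| lines of unit slope, and two points whose abscissae
   differ by a unit lie on at most one common line; a second-moment count then
   gives I(P, L) <= |L| |P| / |R| + sqrt(2 |L| |P| |R| |(z)|), and
   |R| = q^r, |(z)| = q^(r-1) turn this into the estimate. *)

From HB Require Import structures.
From mathcomp Require Import all_boot all_order all_algebra.
From mathcomp Require Import ring lra.
Set Implicit Arguments. Unset Strict Implicit. Unset Printing Implicit Defensive.
Import Order.TTheory GRing.Theory Num.Theory.

Section Fibers.
Variables (I J : finType) (h : I -> J).

Lemma card_le_mul_fibers (D : {set I}) (E : {set J}) k :
  h @: D \subset E -> (forall j, #|[set i in D | h i == j]| <= k) ->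
  #|D| <= k * #|E|.
Proof.
move=> sDE le_fiber; rewrite -sum1_card (partition_big_imset h).
apply: (@leq_trans (\sum_(j in h @: D) k)).
  apply: leq_sum => j _; rewrite sum1dep_card.
  by apply: leq_trans (le_fiber j); apply: subset_leq_card; apply/subsetP => i; rewrite !inE.
by rewrite sum_nat_const mulnC leq_mul2l subset_leq_card ?orbT.
Qed.

Lemma card_const_fibers (D : {set I}) k :
  (forall j, j \in h @: D -> #|[set i in D | h i == j]| = k) ->
  #|D| = #|h @: D| * k.
Proof.
move=> eq_fiber; rewrite -sum1_card (partition_big_imset h) -sum_nat_const.
apply: eq_bigr => j jD; rewrite sum1dep_card -(eq_fiber j jD).
by apply: eq_card => i; rewrite !inE.
Qed.

Lemma sum_card_fibers (D : {set I}) (E : {set J}) :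
  {in D, forall i, h i \in E} ->
  \sum_(j in E) #|[set i in D | h i == j]| = #|D|.
Proof.
move=> hDE; rewrite -sum1_card (partition_big h (mem E)) //=.
by apply: eq_bigr => j _; rewrite sum1dep_card.
Qed.

End Fibers.

Section ValuationRing.
Variable R : finComUnitRingType.
Local Open Scope ring_scope.

Definition is_idealb (I : {set R}) : bool :=
  [&& 0 \in I, [forall x in I, forall y in I, x - y \in I] &
      [forall a : R, forall x in I, a * x \in I]].

Lemma is_idealP (I : {set R}) : reflect (is_ideal I) (is_idealb I).
Proof.
apply: (iffP and3P) => [[I0 /forallP IB /forallP IM]|[I0 IB IM]]; split => //.
- by move=> x y xI yI; move/(_ x): IB; rewrite xI => /forallP/(_ y); rewrite yI.
- by move=> a x xI; move/(_ a): IM => /forallP/(_ x); rewrite xI.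
- by apply/forallP => x; apply/implyP => xI; apply/forallP => y; apply/implyP; apply: IB.
- by apply/forallP => a; apply/forallP => x; apply/implyP; apply: IM.
Qed.

Lemma pideal_is_ideal (x : R) : is_ideal (pideal x).
Proof.
split.
- by apply/imsetP; exists 0; rewrite ?mulr0.
- by move=> _ _ /imsetP[u _ ->] /imsetP[v _ ->]; apply/imsetP; exists (u - v) => //; rewrite mulrBr.
- by move=> a _ /imsetP[u _ ->]; apply/imsetP; exists (a * u) => //; rewrite mulrCA.
Qed.

Lemma mem_pideal (x : R) : x \in pideal x.
Proof. by apply/imsetP; exists 1; rewrite ?mulr1. Qed.

Lemma pideal1 : pideal (1 : R) = [set: R].
Proof. by apply/setP => x; rewrite inE; apply/imsetP; exists x; rewrite ?mul1r. Qed.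

Lemma pideal0 : pideal (0 : R) = [set 0].
Proof.
by apply/setP => x; rewrite inE; apply/imsetP/eqP => [[y _ ->]|->]; [rewrite mul0r | exists 0; rewrite ?mul0r].
Qed.

Lemma ideal_setT (I : {set R}) : is_ideal I -> 1 \in I -> I = [set: R].
Proof.
by move=> [_ _ IM] I1; apply/setP => a; rewrite inE; have := IM a 1 I1; rewrite mulr1.
Qed.

(* In a local ring the maximal ideal [(z)] contains every non-unit [x]: a
   largest proper ideal containing [(x)] is maximal, hence equal to [(z)]. *)
Lemma nonunit_mem_pideal (z x : R) : finite_valuation_ring R -> uniformizer z ->
  x \isn't a GRing.unit -> x \in pideal z.
Proof.
move=> [[M maxM] _] [_ max_z] xNU.
pose proper_over_x J := [&& is_idealb J, 1 \notin J & pideal x \subset J].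
have x_proper : proper_over_x (pideal x).
  rewrite /proper_over_x (introT (is_idealP _) (pideal_is_ideal x)) subxx andbT /=.
  apply/negP => /imsetP[u _ /esym xu1].
  by move/negP: xNU; apply; apply/unitrP; exists u; rewrite mulrC xu1.
case: (@arg_maxnP _ (pideal x) proper_over_x (fun J => #|J|) x_proper) => J.
move=> /and3P[/is_idealP J_ideal J1 xJ] J_largest.
have J_max : is_maximal_ideal J.
  split => //; first by apply/negP => /eqP JT; move/negP: J1; apply; rewrite JT inE.
  move=> I I_ideal sJI; have [I1|I1] := boolP (1 \in I); first by right; apply: ideal_setT.
  left; apply/eqP; rewrite eq_sym eqEcard sJI /=; apply: J_largest.
  by rewrite /proper_over_x (introT (is_idealP _) I_ideal) I1 (subset_trans xJ sJI).
by rewrite ((maxM _).1 max_z) -((maxM _).1 J_max) (subsetP xJ) ?mem_pideal.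
Qed.

Lemma card_mul_ker (w : R) (S : {set R}) :
  0 \in S -> (forall a b, a \in S -> b \in S -> a - b \in S) ->
  [set a | w * a == 0] \subset S ->
  #|S| = (#|[set (w * a)%R | a in S]| * #|[set a | (w * a == 0)%R]|)%N.
Proof.
move=> S0 SB sKS; apply: card_const_fibers => _ /imsetP[a0 a0S ->].
rewrite -(card_imset [set a | w * a == 0] (addrI a0)).
apply: eq_card => i; rewrite !inE; apply/andP/imsetP => [[iS /eqP wi]|[k]].
  by exists (i - a0); rewrite ?inE ?mulrBr ?wi ?subrr // addrC subrK.
rewrite inE => /eqP wk0 ->; split; last by rewrite mulrDr wk0 addr0.
have kS : k \in S by rewrite (subsetP sKS) // inE wk0.
by rewrite -(opprK k) -[- k]sub0r SB ?SB.
Qed.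

Lemma card_ker_mul_pos (w : R) : (0 < #|[set a | (w * a == 0)%R]|)%N.
Proof. by apply/card_gt0P; exists 0; rewrite inE mulr0. Qed.

Lemma card_residue (z : R) : #|[set: R]| = (#|pideal z| * residue_card z)%N.
Proof.
have e := card_mul_ker (w := z) (in_setT 0) (fun _ _ _ _ => in_setT _) (subsetT _).
have im_z : [set z * a | a in [set: R]] = pideal z.
  by apply/setP => x; apply/imsetP/imsetP => -[a _ ->]; exists a.
rewrite im_z in e.
rewrite /residue_card {2}e mulKn //; apply/card_gt0P; exists 0.
by case: (pideal_is_ideal z).
Qed.

Variables (z : R) (r : nat).
Hypothesis nonunit_z : forall x, x \isn't a GRing.unit -> x \in pideal z.
Hypothesis nilp_z : nilp_degree z r.

Lemma nilp_degree_gt0 : (0 < r)%N.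
Proof. by case: nilp_z; case: (r) => // /eqP; rewrite expr0 oner_eq0. Qed.

(* Multiplication by [z ^+ j] maps [R] onto [(z^j)] and [(z)] onto [(z^(j+1))]
   with the same kernel, which lies in [(z)] since [z ^+ j != 0]. *)
Lemma card_pideal_expS j : (j < r)%N ->
  #|pideal (z ^+ j)| = (residue_card z * #|pideal (z ^+ j.+1)|)%N.
Proof.
move=> jr; set ker := [set a | z ^+ j * a == 0].
have ker_z : ker \subset pideal z.
  apply/subsetP => a; rewrite inE => /eqP za0; apply: nonunit_z; apply/negP => ua.
  by case: nilp_z => _ /(_ j jr)/eqP; apply; rewrite -(mulrK ua (z ^+ j)) za0 mul0r.
have [z0 zB _] := pideal_is_ideal z.
have eR := card_mul_ker (w := z ^+ j) (in_setT 0) (fun _ _ _ _ => in_setT _) (subsetT _).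
have ez := card_mul_ker z0 zB ker_z.
have im_R : [set z ^+ j * a | a in [set: R]] = pideal (z ^+ j).
  by apply/setP => x; apply/imsetP/imsetP => -[a _ ->]; exists a.
have im_z : [set z ^+ j * a | a in pideal z] = pideal (z ^+ j.+1).
  apply/setP => x; apply/imsetP/imsetP => [[_ /imsetP[a _ ->] ->]|[a _ ->]].
    by exists a; rewrite // exprSr mulrA.
  by exists (z * a); [apply/imsetP; exists a | rewrite exprSr mulrA].
rewrite im_R in eR; rewrite im_z in ez.
apply/eqP; rewrite -(eqn_pmul2r (card_ker_mul_pos (z ^+ j))) -eR -mulnA -ez.
by rewrite mulnC -card_residue.
Qed.

Lemma card_pideal_exp j : (j <= r)%N -> #|pideal (z ^+ j)| = (residue_card z ^ (r - j))%N.
Proof.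
move=> jr; rewrite -(subKn jr); elim: (r - j)%N (leq_subr j r) => [|k IHk] kr.
  by rewrite subn0 subnn (proj1 nilp_z) pideal0 cards1.
rewrite subKn // card_pideal_expS; last by rewrite ltn_subrL nilp_degree_gt0.
by rewrite subnSK // (IHk (ltnW kr)) (subKn (ltnW kr)) expnS.
Qed.

Lemma card_valuation_ring : #|[set: R]| = (residue_card z ^ r)%N.
Proof. by rewrite -pideal1 -(expr0 z) card_pideal_exp // subn0. Qed.

Lemma card_uniformizer_ideal : #|pideal z| = (residue_card z ^ r.-1)%N.
Proof. by rewrite -(expr1 z) card_pideal_exp ?nilp_degree_gt0 // subn1. Qed.

Lemma residue_card_gt0 : (0 < residue_card z)%N.
Proof.
rewrite lt0n; apply/eqP => q0; suff : (0 < #|[set: R]|)%N.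
  by rewrite card_valuation_ring q0 exp0n ?nilp_degree_gt0.
by apply/card_gt0P; exists 0; rewrite inE.
Qed.

Lemma card_valuation_ring_mul_ideal :
  (#|[set: R]| * #|pideal z| = residue_card z ^ (2 * r - 1))%N.
Proof.
rewrite card_valuation_ring card_uniformizer_ideal -expnD mul2n -addnn -addnBA ?subn1 //.
exact: nilp_degree_gt0.
Qed.

End ValuationRing.

Section SumBounds.
Variable F : realFieldType.
Local Open Scope ring_scope.

Lemma le_add_sqr_div (x mu lam : F) : 0 < lam -> x <= mu + lam + (x - mu) ^+ 2 / (4 * lam).
Proof.
move=> lam_gt0; rewrite -subr_ge0.
have -> : mu + lam + (x - mu) ^+ 2 / (4 * lam) - x = (x - mu - 2 * lam) ^+ 2 / (4 * lam).
  by field; rewrite gt_eqF.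
by rewrite divr_ge0 ?sqr_ge0 // mulr_ge0 // ltW.
Qed.

Variables (I : finType) (x : I -> F).

Lemma sum_sqr_sub (D : {set I}) mu :
  \sum_(i in D) (x i - mu) ^+ 2 =
    \sum_(i in D) x i ^+ 2 - 2 * mu * \sum_(i in D) x i + #|D|%:R * mu ^+ 2.
Proof.
rewrite (eq_bigr (fun i => (x i ^+ 2 - 2 * mu * x i) + mu ^+ 2)); last by move=> i _; ring.
by rewrite big_split sumrB sumr_const -mulr_sumr /= [#|D|%:R * _]mulr_natl.
Qed.

(* Pointwise AM-GM [x <= mu + lam + (x - mu)^2 / (4 lam)] replaces Cauchy-Schwarz. *)
Lemma sum_le_of_sum_sqr_sub (D E : {set I}) (mu lam V : F) :
  0 < lam -> E \subset D -> \sum_(i in D) (x i - mu) ^+ 2 <= V ->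
  \sum_(i in E) x i <= #|E|%:R * mu + #|E|%:R * lam + V / (4 * lam).
Proof.
move=> lam_gt0 sED le_V.
apply: le_trans (ler_sum _ (fun i _ => le_add_sqr_div (x i) mu lam_gt0)) _.
rewrite !big_split /= !sumr_const -mulr_suml [#|E|%:R * mu]mulr_natl [#|E|%:R * lam]mulr_natl lerD2l.
apply: ler_wpM2r; first by rewrite invr_ge0 mulr_ge0 // ltW.
apply: le_trans le_V; rewrite [X in _ <= X](big_setID E) /= (setIidPr sED) lerDl.
by apply: sumr_ge0 => i _; rewrite sqr_ge0.
Qed.

End SumBounds.

Section AffineLines.
Variable R : finComUnitRingType.
Local Open Scope ring_scope.

Definition on_line (p l : R * R) : bool := p.2 == l.1 * p.1 + l.2.
Definition unit_set : {set R} := [set t | t \is a GRing.unit].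
Definition unit_lines : {set R * R} := [set l | l.1 \is a GRing.unit].
Definition points_on (P : {set R * R}) (l : R * R) : {set R * R} :=
  [set p in P | on_line p l].
Definition incidences (P L : {set R * R}) : {set (R * R) * (R * R)} :=
  [set pl | [&& pl.1 \in P, pl.2 \in L & on_line pl.1 pl.2]].
Definition line_pairs (P : {set R * R}) : {set (R * R) * (R * R) * (R * R)} :=
  [set t | [&& t.1.1 \in unit_lines, t.1.2 \in P, t.2 \in P,
               on_line t.1.2 t.1.1 & on_line t.2 t.1.1]].

Lemma card_incidences P L : #|incidences P L| = (\sum_(l in L) #|points_on P l|)%N.
Proof.
rewrite -(@sum_card_fibers _ _ snd (incidences P L) L); last first.
  by move=> pl; rewrite inE => /and3P[].
apply: eq_bigr => l lL; rewrite -(@card_in_imset _ _ (fun p => (p, l)) (points_on P l)); last first.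
  by move=> a b _ _ [].
apply: eq_card => -[p l']; rewrite /points_on !inE /=.
apply/andP/imsetP => [[/and3P[pP _ pl] /eqP el]|[p' ]].
  by subst l'; exists p; rewrite ?inE ?pP.
by rewrite inE => /andP[pP pl] [-> ->]; rewrite pP lL pl eqxx.
Qed.

Lemma card_unit_lines_through p : #|[set l in unit_lines | on_line p l]| = #|unit_set|.
Proof.
rewrite -(@card_in_imset _ _ (fun t => (t, p.2 - t * p.1)) unit_set); last first.
  by move=> a b _ _ [].
apply: eq_card => -[t b]; rewrite !inE /on_line /=.
apply/andP/imsetP => [[tU /eqP pl]|[t' ]]; first by exists t; rewrite ?inE // pl addrC addKr.
by rewrite inE => tU [-> ->]; rewrite tU addrC subrK.
Qed.

Lemma card_incidences_unit_lines P :
  #|incidences P unit_lines| = (#|P| * #|unit_set|)%N.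
Proof.
rewrite -(@sum_card_fibers _ _ fst (incidences P unit_lines) P); last first.
  by move=> pl; rewrite inE => /and3P[].
rewrite -sum_nat_const; apply: eq_bigr => p pP; rewrite -(card_unit_lines_through p).
rewrite -(@card_in_imset _ _ (fun l => (p, l)) [set l in unit_lines | on_line p l]);
  last by move=> a b _ _ [].
apply: eq_card => -[p' l]; rewrite !inE /=.
apply/andP/imsetP => [[/and3P[_ lU pl] /eqP ep]|[l' ]].
  by subst p'; exists l; rewrite ?inE ?lU.
by rewrite !inE => /andP[lU pl] [-> ->]; rewrite pP lU pl eqxx.
Qed.

Lemma on_line_sub l p p' : on_line p l -> on_line p' l -> p'.2 - p.2 = l.1 * (p'.1 - p.1).
Proof. by move=> /eqP -> /eqP ->; ring. Qed.

Lemma line_through_unit_diff l l' p p' : on_line p l -> on_line p' l ->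
  on_line p l' -> on_line p' l' -> p'.1 - p.1 \is a GRing.unit -> l = l'.
Proof.
move=> pl p'l pl' p'l' pp'U.
have e1 : l.1 = l'.1 by apply: (mulIr pp'U); rewrite -(on_line_sub pl p'l) -(on_line_sub pl' p'l').
have e2 : l.2 = l'.2.
  by move/eqP: pl => pl; move/eqP: pl'; rewrite pl e1 => /addrI.
exact: injective_projections.
Qed.

Lemma card_line_pairs P :
  #|line_pairs P| = (\sum_(l in unit_lines) #|points_on P l| ^ 2)%N.
Proof.
rewrite -(@sum_card_fibers _ _ (fun t => t.1.1) (line_pairs P) unit_lines); last first.
  by move=> t; rewrite inE => /and5P[].
apply: eq_bigr => l lU; rewrite expnS expn1 -cardsX.
rewrite -(@card_in_imset _ _ (fun pp => (l, pp.1, pp.2)) (setX (points_on P l) (points_on P l)));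
  last by move=> [a b] [c d] _ _ [-> ->].
apply: eq_card => -[[l' p] p']; rewrite /points_on !inE /=.
apply/idP/imsetP => [/andP[/and5P[_ pP p'P pl p'l] /eqP el]|[[a b]]].
  by subst l'; exists (p, p'); rewrite // !inE pP p'P pl p'l.
rewrite !inE /= => /andP[/andP[aP al] /andP[bP bl]] [-> -> ->].
by move: lU; rewrite inE => ->; rewrite aP bP al bl eqxx.
Qed.

Variable M : {set R}.
Hypothesis nonunit_M : forall x : R, x \isn't a GRing.unit -> x \in M.

(* Given [p0], a triple [(l, p0, p)] is determined by [p] when [p.1 - p0.1] is
   a unit, and by the slope of [l] and [p.1 - p0.1 \in M] otherwise. *)
Lemma card_line_pairs_fiber P p0 :
  (#|[set t in line_pairs P | t.1.2 == p0]| <= #|P| + #|unit_set| * #|M|)%N.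
Proof.
set Fib := [set t in line_pairs P | t.1.2 == p0].
set U := [set t : (R * R) * (R * R) * (R * R) | t.2.1 - p0.1 \is a GRing.unit].
rewrite -(cardsID U Fib); apply: leq_add.
  rewrite -(@card_in_imset _ _ snd (Fib :&: U)); last first.
    move=> [[l p] p'] [[l' q] q']; rewrite !inE /=.
    move=> /andP[/andP[/and5P[_ _ _ pl p'l] /eqP ep] pp'U].
    move=> /andP[/andP[/and5P[_ _ _ ql q'l] /eqP eq] _] /= ep'.
    by subst p q q'; rewrite (line_through_unit_diff pl p'l ql q'l).
  apply: subset_leq_card; apply/subsetP => x /imsetP[t].
  by rewrite !inE => /andP[/andP[/and5P[_ _ ? _ _] _] _] ->.
rewrite -(card_unit_lines_through p0) -cardsX.
rewrite -(@card_in_imset _ _ (fun t => (t.1.1, t.2.1 - p0.1)) (Fib :\: U)); last first.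
  move=> [[l p] p'] [[l' q] q']; rewrite !inE /=.
  move=> /andP[_ /andP[/and5P[_ _ _ pl /eqP p'l] /eqP ep]].
  move=> /andP[_ /andP[/and5P[_ _ _ ql /eqP q'l] /eqP eq]] [el ed].
  subst p q l'; have e1 : p'.1 = q'.1 by move/(congr1 (+%R^~ p0.1)): ed; rewrite !subrK.
  by congr (_, _); apply: injective_projections; rewrite // p'l q'l e1.
apply: subset_leq_card; apply/subsetP => x /imsetP[[[l p] p']].
rewrite !inE /= => /andP[pp'NU /andP[/and5P[lU _ _ pl _] /eqP ep]] ->.
by subst p; rewrite /= lU pl /= nonunit_M.
Qed.

Lemma sum_points_on_sqr P :
  (\sum_(l in unit_lines) #|points_on P l| ^ 2 <= (#|P| + #|unit_set| * #|M|) * #|P|)%N.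
Proof.
rewrite -card_line_pairs; apply: (@card_le_mul_fibers _ _ (fun t => t.1.2)).
  by apply/subsetP => x /imsetP[t]; rewrite inE => /and5P[_ ? _ _ _] ->.
exact: card_line_pairs_fiber.
Qed.

Variable F : realFieldType.

Lemma sum_points_on_variance P :
  \sum_(l in unit_lines) (#|points_on P l|%:R - #|P|%:R / #|[set: R]|%:R) ^+ 2
    <= 2 * #|P|%:R * #|[set: R]|%:R * #|M|%:R :> F.
Proof.
rewrite sum_sqr_sub.
have sum1 : \sum_(l in unit_lines) #|points_on P l|%:R = (#|P| * #|unit_set|)%:R :> F.
  by rewrite -natr_sum -card_incidences card_incidences_unit_lines.
have sum2 : \sum_(l in unit_lines) #|points_on P l|%:R ^+ 2
    <= ((#|P| + #|unit_set| * #|M|) * #|P|)%:R :> F.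
  rewrite (eq_bigr (fun l => (#|points_on P l| ^ 2)%N%:R)); last by move=> l _; rewrite natrX.
  by rewrite -natr_sum ler_nat sum_points_on_sqr.
have card_lines : #|unit_lines| = (#|unit_set| * #|[set: R]|)%N.
  by rewrite -cardsX; apply: eq_card => -[a b]; rewrite !inE andbT.
have card_R : (#|[set: R]| <= #|unit_set| + #|M|)%N.
  rewrite cardsT -(cardsC unit_set) leq_add2l; apply: subset_leq_card.
  by apply/subsetP => x; rewrite !inE => /nonunit_M.
have card_P : (#|P| <= #|[set: R]| * #|[set: R]|)%N.
  by rewrite cardsT -card_prod -cardsT subset_leq_card // subsetT.
have card_U : (#|unit_set| <= #|[set: R]|)%N by rewrite subset_leq_card // subsetT.
have n_gt0 : 0 < #|[set: R]|%:R :> F by rewrite ltr0n; apply/card_gt0P; exists 0; rewrite inE.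
move: sum2 card_R card_P card_U; rewrite sum1 card_lines -!(ler_nat F) !natrM !natrD natrM.
move: n_gt0; set s2 := \sum_(l in unit_lines) _.
set n := #|[set: R]|%:R; set p := #|P|%:R; set t := #|unit_set|%:R; set m := #|M|%:R.
move=> n_gt0 sum2 card_R card_P card_U.
have p_ge0 : 0 <= p by rewrite ler0n.
have t_ge0 : 0 <= t by rewrite ler0n.
have m_ge0 : 0 <= m by rewrite ler0n.
rewrite -(ler_pM2r n_gt0).
have -> : (s2 - 2 * (p / n) * (p * t) + t * n * (p / n) ^+ 2) * n = s2 * n - p * p * t.
  by field; rewrite gt_eqF.
have le_s2 : s2 * n <= (p + t * m) * p * n by rewrite ler_pM2r.
have le_nonunits : p * p * (n - t) <= p * p * m.
  by apply: ler_wpM2l; [rewrite mulr_ge0 | rewrite lerBlDl].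
have le_p2m : p * p * m <= n * n * p * m by apply: ler_wpM2r => //; apply: ler_wpM2r.
have le_tm : t * m * p * n <= n * m * p * n.
  by rewrite -!mulrA; apply: ler_wpM2r => //; rewrite !mulr_ge0 // ltW.
clearbody n p t m s2; nra.
Qed.

Lemma incidence_bound (P L : {set R * R}) (lam : F) : 0 < lam -> L \subset unit_lines ->
  #|incidences P L|%:R <= #|L|%:R * #|P|%:R / #|[set: R]|%:R + #|L|%:R * lam
     + #|P|%:R * #|[set: R]|%:R * #|M|%:R / (2 * lam).
Proof.
move=> lam_gt0 sLU; rewrite card_incidences natr_sum.
apply: le_trans (sum_le_of_sum_sqr_sub lam_gt0 sLU (sum_points_on_variance P)) _.
rewrite mulrA lerD2l le_eqVlt; apply/orP; left; apply/eqP.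
by field; rewrite gt_eqF.
Qed.

End AffineLines.

Section FinalEstimate.
Local Open Scope ring_scope.
Variable F : realFieldType.

Lemma le_two_terms_of_incidence_bound (a b m K I l p X n nz : F) :
  1 <= K -> 0 < a -> 0 < b -> 0 < m -> 0 < n -> 0 < nz -> 0 <= l -> 0 <= p ->
  a * b * m <= K * I ->
  (forall lam, 0 < lam -> I <= l * p / n + l * lam + p * nz / (2 * lam)) ->
  l <= K * m * b -> p <= X ->
  a * b * m <= 2 * (K ^+ 2 * m * b * X / n) + 2 * (K ^+ 3 * X * nz / a).
Proof.
move=> K_ge1 a_gt0 b_gt0 m_gt0 n_gt0 nz_gt0 l_ge0 p_ge0 le_I incidence le_l le_p.
have K_gt0 : 0 < K by apply: lt_le_trans K_ge1.
(* [lam = a / (2 K^2)] makes the middle term at most [a b m / 2]. *)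
have lam_gt0 : 0 < a / (2 * K ^+ 2) by rewrite divr_gt0 // mulr_gt0 // exprn_gt0.
have le_KI := ler_wpM2l (ltW K_gt0) (incidence _ lam_gt0).
have term1 : K * (l * p / n) <= K ^+ 2 * m * b * X / n.
  rewrite mulrA; apply: ler_wpM2r; first by rewrite invr_ge0 ltW.
  have -> : K ^+ 2 * m * b * X = K * (K * m * b * X) by ring.
  by rewrite ler_pM2l // ler_pM.
have term2 : K * (l * (a / (2 * K ^+ 2))) <= a * b * m / 2.
  have -> : K * (l * (a / (2 * K ^+ 2))) = l * (a / (2 * K)) by field; rewrite gt_eqF.
  apply: le_trans (ler_wpM2r _ le_l) _; first by rewrite divr_ge0 ?mulr_ge0 ?ltW.
  by rewrite le_eqVlt; apply/orP; left; apply/eqP; field; rewrite gt_eqF.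
have term3 : K * (p * nz / (2 * (a / (2 * K ^+ 2)))) <= K ^+ 3 * X * nz / a.
  have -> : K * (p * nz / (2 * (a / (2 * K ^+ 2)))) = K ^+ 3 * p * nz / a.
    by field; rewrite !gt_eqF.
  apply: ler_wpM2r; first by rewrite invr_ge0 ltW.
  apply: ler_wpM2r; first exact: ltW.
  by rewrite ler_pM2l // exprn_gt0.
rewrite !mulrDr in le_KI; lra.
Qed.

Lemma min_le_of_le_two_terms (a b m K X Y n nz : F) :
  1 <= K -> 0 < a -> 0 < b -> 0 < m -> 0 < n -> 0 < nz -> 0 <= X -> b <= Y ->
  a * b * m <= 2 * (K ^+ 2 * m * b * X / n) + 2 * (K ^+ 3 * X * nz / a) ->
  Num.min (n * a * b) (a ^+ 2 * b ^+ 2 * m / nz) <= 4 * K ^+ 3 * (X * Y).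
Proof.
move=> K_ge1 a_gt0 b_gt0 m_gt0 n_gt0 nz_gt0 X_ge0 le_b split.
have K_gt0 : 0 < K by apply: lt_le_trans K_ge1.
have le_XY : X * b <= X * Y := ler_wpM2l X_ge0 le_b.
have XY_ge0 : 0 <= X * Y := le_trans (mulr_ge0 X_ge0 (ltW b_gt0)) le_XY.
have K2_ge0 : 0 <= K ^+ 2 by rewrite exprn_ge0 // ltW.
have K2_le_K3 : K ^+ 2 <= K ^+ 3 by apply: ler_weXn2l.
set S := K ^+ 2 * m * b * X / n in split; set T := K ^+ 3 * X * nz / a in split.
have [le_TS|le_ST] := lerP T S.
- rewrite ge_min; apply/orP; left.
  have : (n * a) * (m * b) <= (4 * K ^+ 2 * X) * (m * b).
    have -> : 4 * K ^+ 2 * X * (m * b) = 4 * S * n by rewrite /S; field; rewrite gt_eqF.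
    have -> : n * a * (m * b) = a * b * m * n by ring.
    by apply: ler_wpM2r; [exact: ltW | lra].
  rewrite ler_pM2r ?mulr_gt0 // => le_na.
  apply: le_trans (ler_wpM2r (ltW b_gt0) le_na) _; nra.
- rewrite ge_min; apply/orP; right.
  rewrite ler_pdivrMr //.
  have : (a ^+ 2 * b * m) * b <= (4 * K ^+ 3 * X * nz) * b.
    apply: ler_wpM2r; first exact: ltW.
    have -> : 4 * K ^+ 3 * X * nz = 4 * T * a by rewrite /T; field; rewrite gt_eqF.
    have -> : a ^+ 2 * b * m = a * b * m * a by ring.
    by apply: ler_wpM2r; [exact: ltW | lra].
  have -> : a ^+ 2 * b * m * b = a ^+ 2 * b ^+ 2 * m by ring.
  move=> le_ab; apply: le_trans le_ab _.
  have -> : 4 * K ^+ 3 * X * nz * b = nz * (4 * K ^+ 3 * (X * b)) by ring.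
  by rewrite [_ * nz]mulrC ler_pM2l // ler_pM2l ?mulr_gt0 ?exprn_gt0.
Qed.
End FinalEstimate.

Lemma card_le_setmul (R : finComUnitRingType) (B C : {set R}) (c : R) :
  c \in C -> c \is a GRing.unit -> #|B| <= #|setmul B C|.
Proof.
move=> cC cU; rewrite -(@card_in_imset _ _ ( *%R^~ c) B); last by move=> y y' _ _; apply: mulIr.
by apply: subset_leq_card; apply/subsetP => l /imsetP[y yB ->]; apply/imset2P; exists y c.
Qed.

Section PointsAndLines.
Variable R : finComUnitRingType.
Local Open Scope ring_scope.
Variables (G : {set R}) (g h : R -> R) (K : nat).
Hypotheses (G_unit : {in G, forall x, x \is a GRing.unit})
  (G_mul : {in G &, forall x y, x * y \in G}) (G_inv : {in G, forall x, x^-1 \in G}).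
Hypotheses (g_unit : {in G, forall x, g x \is a GRing.unit})
  (h_unit : {in G, forall x, h x \is a GRing.unit}).
Hypothesis card_g_ratios : forall w, w \in G -> (#|[set (g (x * w) / g x)%R | x in G]| <= K)%N.
Hypothesis mu_le : forall u, u \in G -> (mu_on G (fun x => (x * g x * h (u * x))%R) <= K)%N.
Variables A B C : {set R}.
Hypotheses (sAG : A \subset G) (sBG : B \subset G) (sCG : C \subset G).

Let f x y := g x * h y * (x + y).

(* The point [(x c, f(x, y) / g(x c))] lies on [line_of (c, y, g x / g (x c))], and
   [g x / g (x c)] is a [g]-ratio at [c^-1]: hence at most [K |B| |C|] lines. *)
Definition line_of (t : R * R * R) : R * R :=
  let: (c, y, rho) := t in (rho * h y / c, rho * h y * y).
Definition line_params : {set R * R * R} :=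
  [set t | [&& t.1.1 \in C, t.1.2 \in B & t.2 \in [set g (x * t.1.1^-1) / g x | x in G]]].
Definition lines : {set R * R} := line_of @: line_params.
Definition points : {set R * R} :=
  [set (p.1, p.2 / g p.1) | p in setX (setmul A C) (fimage f A B)].
Definition incidence_map (d : R * R * R) : (R * R) * (R * R) :=
  let: (x, y, c) := d in ((x * c, f x y / g (x * c)), line_of (c, y, g x / g (x * c))).

Lemma card_points : (#|points| <= #|setmul A C| * #|fimage f A B|)%N.
Proof. by rewrite -cardsX leq_imset_card. Qed.

Lemma card_lines : (#|lines| <= K * (#|C| * #|B|))%N.
Proof.
rewrite -cardsX; apply: leq_trans (leq_imset_card _ _) _.
apply: (@card_le_mul_fibers _ _ (fun t => t.1)).
  by apply/subsetP => l /imsetP[t]; rewrite inE => /and3P[cC yB _] ->; rewrite inE cC yB.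
move=> [c y]; case: (set_0Vmem [set t in line_params | t.1 == (c, y)]) => [->|[t0]].
  by rewrite cards0.
rewrite !inE => /andP[/and3P[+ _ _] /eqP t0cy]; rewrite t0cy /= => cC.
apply: leq_trans (card_g_ratios (G_inv (subsetP sCG _ cC))).
rewrite -(@card_in_imset _ _ snd [set t in line_params | t.1 == (c, y)]); last first.
  by move=> [cy rho] [cy' rho'] /[!inE] /andP[_ /eqP /= ->] /andP[_ /eqP /= ->] /= ->.
apply: subset_leq_card; apply/subsetP => l /imsetP[[cy rho]].
by rewrite !inE /= => /andP[/and3P[_ _ rhoG] /eqP e] ->; rewrite e in rhoG.
Qed.

Lemma lines_unit_slope : lines \subset unit_lines R.
Proof.
apply/subsetP => l /imsetP[[[c y] rho]]; rewrite inE /= => /and3P[cC yB /imsetP[x xG ->]] ->.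
have cG := subsetP sCG _ cC; have xcG : x * c^-1 \in G by rewrite G_mul ?G_inv.
by rewrite inE /= !unitrM !unitrV (g_unit xcG) (g_unit xG) (h_unit (subsetP sBG _ yB)) G_unit.
Qed.

Lemma incidence_map_sub :
  incidence_map @: setX (setX A B) C \subset incidences points lines.
Proof.
apply/subsetP => l /imsetP[[[x y] c]]; rewrite !inE /= => /andP[/andP[xA yB] cC] ->.
have xG := subsetP sAG _ xA; have cG := subsetP sCG _ cC; have xcG := G_mul xG cG.
apply/and3P; split.
- apply/imsetP; exists (x * c, f x y) => //.
  by rewrite inE; apply/andP; split; apply/imset2P; [exists x c | exists x y].
- apply/imsetP; exists (c, y, g x / g (x * c)) => //.
  by rewrite inE /= cC yB; apply/imsetP; exists (x * c); rewrite ?mulrK ?G_unit.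
- rewrite /on_line /f /=; apply/eqP.
  have -> : g x / g (x * c) * h y / c * (x * c) = g x / g (x * c) * h y * x * (c^-1 * c).
    by ring.
  by rewrite mulVr ?G_unit // mulr1; ring.
Qed.

Lemma incidence_map_eq x y c x' y' c' :
  [/\ x \in G, y \in G & c \in G] -> [/\ x' \in G, y' \in G & c' \in G] ->
  incidence_map (x, y, c) = incidence_map (x', y', c') ->
  [/\ x * c = x' * c', y * c = y' * c' & x * g x * h y = x' * g x' * h y'].
Proof.
move=> [xG yG cG] [x'G y'G c'G] [exc _ eslope eicpt].
(* On [line_of (c, y, g x / g (x c))], intercept / slope is [y c] and
   slope * [g (x c) * (x c)] is [x g(x) h(y)]. *)
have icpt_slope (a b d : R) : a \is a GRing.unit -> d \is a GRing.unit ->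
    a * b / (a / d) = b * d.
  move=> aU dU; rewrite invrM ?unitrV // invrK.
  have -> : a * b * (d * a^-1) = b * d * (a * a^-1) by ring.
  by rewrite mulrV // mulr1.
have slope_run (a b d e z : R) : e \is a GRing.unit -> d \is a GRing.unit ->
    (a / e * b / d) * (e * (z * d)) = z * a * b.
  move=> eU dU; have -> : a / e * b / d * (e * (z * d)) = z * a * b * (e^-1 * e) * (d^-1 * d).
    by ring.
  by rewrite !mulVr // !mulr1.
have xcG := G_mul xG cG; have x'c'G := G_mul x'G c'G.
have rhoU : g x / g (x * c) * h y \is a GRing.unit.
  by rewrite !unitrM unitrV !g_unit ?h_unit.
have rho'U : g x' / g (x' * c') * h y' \is a GRing.unit.
  by rewrite !unitrM unitrV !g_unit ?h_unit.
split=> //.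
  by rewrite -(icpt_slope _ y c rhoU) ?G_unit // -(icpt_slope _ y' c' rho'U) ?G_unit // eicpt eslope.
rewrite -(slope_run (g x) (h y) c (g (x * c)) x) ?g_unit ?G_unit //.
by rewrite -(slope_run (g x') (h y') c' (g (x' * c')) x') ?g_unit ?G_unit // eslope exc.
Qed.

(* The fibre through [(x0, y0, c0)] injects, via [x], into a level set of
   [x |-> x g(x) h(u x)] with [u = y0 / x0]. *)
Lemma card_incidence_map_fiber j :
  (#|[set d in setX (setX A B) C | incidence_map d == j]| <= K)%N.
Proof.
set fib := [set d in _ | _].
have [->|[[[x0 y0] c0] d0]] := set_0Vmem fib; first by rewrite cards0.
have in_G d : d \in fib -> [/\ d.1.1 \in G, d.1.2 \in G & d.2 \in G].
  rewrite !inE => /andP[/andP[/andP[xA yB] cC] _].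
  by split; [apply: (subsetP sAG) | apply: (subsetP sBG) | apply: (subsetP sCG)].
have [x0G y0G c0G] := in_G _ d0.
have fib_eq x y c : (x, y, c) \in fib ->
    [/\ x * c = x0 * c0, y * c = y0 * c0 & x * g x * h y = x0 * g x0 * h y0].
  move=> d; apply: incidence_map_eq (in_G _ d) (in_G _ d0) _.
  by move: d d0; rewrite !inE => /andP[_ /eqP ->] /andP[_ /eqP ->].
have uG : y0 / x0 \in G by rewrite G_mul ?G_inv.
apply: leq_trans (mu_le uG); apply: leq_trans (leq_bigmax (x0 * g x0 * h y0)).
rewrite -(@card_in_imset _ _ (fun d => d.1.1) fib); last first.
  move=> [[x y] c] [[x' y'] c'] d d' /= exx'; subst x'.
  have [xG _ cG] := in_G _ d; have [_ _ c'G] := in_G _ d'.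
  have [exc eyc _] := fib_eq _ _ _ d; have [exc' eyc' _] := fib_eq _ _ _ d'.
  have ecc' : c = c' by apply: (mulrI (G_unit xG)); rewrite exc exc'.
  by subst c'; have -> : y = y' by apply: (mulIr (G_unit cG)); rewrite eyc eyc'.
apply: subset_leq_card; apply/subsetP => _ /imsetP[[[x y] c] d ->] /=.
have [/= xG _ /= cG] := in_G _ d; have [exc eyc ephi] := fib_eq _ _ _ d.
have eux : y0 / x0 * x = y.
  apply: (mulIr (G_unit cG)).
  by rewrite -[y0 / x0 * x * c]mulrA exc mulrA divrK ?G_unit // eyc.
by rewrite inE xG /= eux ephi eqxx.
Qed.

Lemma card_triples_le_incidences :
  (#|A| * #|B| * #|C| <= K * #|incidences points lines|)%N.
Proof.
rewrite -!cardsX; apply: card_le_mul_fibers incidence_map_sub _.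
exact: card_incidence_map_fiber.
Qed.

Hypothesis K_gt0 : (0 < K)%N.
Variables (z : R) (r : nat).
Hypotheses (nonunit_z : forall x, x \isn't a GRing.unit -> x \in pideal z)
  (nilp_z : nilp_degree z r).
Let q := residue_card z.

Lemma card_estimate_nonempty : (0 < #|A|)%N -> (0 < #|B|)%N -> (0 < #|C|)%N ->
  Num.min ((q ^ r * #|A| * #|B|)%N%:R)
    ((#|A| ^ 2 * #|B| ^ 2 * #|C|)%N%:R / (q ^ (2 * r - 1))%N%:R)
  <= (4 * K ^ 3)%:R * ((#|setmul A C| * #|fimage f A B|) * #|setmul B C|)%N%:R :> rat.
Proof.
move=> a_gt0 b_gt0 /card_gt0P[c0 c0C].
have m_gt0 : (0 < #|C|)%N by apply/card_gt0P; exists c0.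
have qk_gt0 k : 0 < q%:R ^+ k :> rat.
  by rewrite exprn_gt0 // ltr0n (residue_card_gt0 nonunit_z nilp_z).
have le_b : (#|B| <= #|setmul B C|)%N.
  by rewrite (card_le_setmul _ c0C) // G_unit ?(subsetP sCG).
rewrite !natrM !natrX; apply: min_le_of_le_two_terms;
  rewrite ?ler1n ?ltr0n ?mulr_ge0 ?ler0n ?qk_gt0 ?ler_nat //.
apply: (le_two_terms_of_incidence_bound (I := #|incidences points lines|%:R)
  (l := #|lines|%:R) (p := #|points|%:R)); rewrite ?ler1n ?ltr0n ?ler0n ?qk_gt0 //.
- by rewrite -!natrM ler_nat card_triples_le_incidences.
- move=> lam lam_gt0; have := incidence_bound nonunit_z points lam_gt0 lines_unit_slope.
  rewrite -[#|points|%:R * _ * _]mulrA -(natrM _ #|[set: R]|).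
  by rewrite (card_valuation_ring_mul_ideal nonunit_z nilp_z)
    (card_valuation_ring nonunit_z nilp_z) !natrX.
- by rewrite -!natrM ler_nat -mulnA card_lines.
- by rewrite -natrM ler_nat card_points.
Qed.

Lemma card_estimate :
  Num.min ((q ^ r * #|A| * #|B|)%N%:R)
    ((#|A| ^ 2 * #|B| ^ 2 * #|C|)%N%:R / (q ^ (2 * r - 1))%N%:R)
  <= (4 * K ^ 3)%:R * ((#|setmul A C| * #|fimage f A B|) * #|setmul B C|)%N%:R :> rat.
Proof.
have [abm0|] := posnP (#|A| * #|B| * #|C|); last first.
  by rewrite !muln_gt0 => /andP[/andP[? ?] ?]; apply: card_estimate_nonempty.
rewrite (_ : (#|A| ^ 2 * #|B| ^ 2 * #|C|)%N = 0%N) ?mul0r; last first.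
  by apply/eqP; move/eqP: abm0; rewrite !muln_eq0 !orbb.
by apply: (le_trans _ (mulr_ge0 (ler0n _ _) (ler0n _ _))); rewrite ge_min lexx orbT.
Qed.

End PointsAndLines.

Local Open Scope ring_scope.

Theorem theorem1p14 :
  forall (r K : nat), (1 <= K)%N ->
  exists c : rat, 0 < c /\
  forall (R : finComUnitRingType) (z : R) (G : {set R}) (g h : R -> R),
    finite_valuation_ring R -> uniformizer z -> nilp_degree z r ->
    unit_subgroup G ->
    {in G, forall x, g x \is a GRing.unit} ->
    {in G, forall x, h x \is a GRing.unit} ->
    (forall w, w \in G ->
       (#|[set (g (x * w) / g x)%R | x in G]| <= K)%N /\
       (#|[set (h (x * w) / h x)%R | x in G]| <= K)%N) ->
    (forall u, u \in G -> (mu_on G (fun x => (x * g x * h (u * x))%R) <= K)%N) ->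
    forall A B C : {set R}, A \subset G -> B \subset G -> C \subset G ->
      let q := residue_card z in
      let f := fun x y => g x * h y * (x + y) in
      c * Num.min ((q ^ r * #|A| * #|B|)%N%:R)
                  ((#|A| ^ 2 * #|B| ^ 2 * #|C|)%N%:R / (q ^ (2 * r - 1))%N%:R)
      <= (#|fimage f A B| * #|setmul A C| * #|setmul B C|)%N%:R.
Proof.
move=> r K K_gt0; exists (4 * K ^ 3)%:R^-1.
have c_gt0 : 0 < (4 * K ^ 3)%:R^-1 :> rat by rewrite invr_gt0 ltr0n muln_gt0 expn_gt0 K_gt0.
split=> // R z G g h fvr unif nilp [G_unit _ G_mul G_inv] g_unit h_unit ratios mu_le
  A B C sAG sBG sCG /=.
(* Only the [g]-half of hypothesis (i) is needed. *)
have g_ratios w (wG : w \in G) := (ratios w wG).1.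
have nonunit_z x := @nonunit_mem_pideal R z x fvr unif.
have estimate := card_estimate G_unit G_mul G_inv g_unit h_unit g_ratios mu_le
  sAG sBG sCG K_gt0 nonunit_z nilp.
apply: le_trans (ler_wpM2l (ltW c_gt0) estimate) _.
rewrite mulKf ?ler_nat ?(mulnC #|setmul A C|) //.
by rewrite -invr_eq0 gt_eqF.
Qed.
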